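(* Let $k\in\mathbb N$. For every $i\in\{1,\dots,k\}$, let $G_i$ be a countable group, and let $X_i$ be a proper metric space equipped with a $G_i$-action by isometries which is properly proximal. Let $G$ be a subgroup of $G_1\times\dots\times G_k$ whose projection to each factor is surjective. Then the $G$-action on $X_1\times\dots\times X_k$ (the product action, with the product metric, e.g. the $\ell^2$-product metric) is properly proximal.
   Context: For a group $H$ acting by isometries on a proper metric space $Y$: a sequence $(h_n)$ in $H$ escapes every compact subspace of $Y$ if for some (equivalently any) $y\in Y$, $(h_ny)$ eventually leaves every compact subset. The action is properly proximal if there exist finitely many compact metrizable $H$-spaces $K_1,\dots,K_\ell$, none carrying an $H$-invariant probability measure, and diffuse probability measures $\eta_i$ on $K_i$, such that for every sequence $(h_n)$ escaping every compact subspace of $Y$, there exist $i$ and a subsequence $(h_{\sigma(n)})$ with $h_{\sigma(n)}h\eta_i-h_{\sigma(n)}\eta_i\to0$ weak-$*$ for every $h\in H$. *)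

From HB Require Import structures.
From mathcomp Require Import all_boot all_order all_algebra.
From mathcomp Require Import monoid.
From mathcomp Require Import all_classical all_reals.
From mathcomp Require Import topology normedtype sequences measure lebesgue_integral probability.
From mathcomp Require Import Rstruct Rstruct_topology.

Set Implicit Arguments.
Unset Strict Implicit.
Unset Printing Implicit Defensive.

Import Order.TTheory GRing.Theory Num.Theory.
Local Open Scope classical_set_scope.
Local Open Scope ring_scope.

Notation R := Rdefinitions.R.

Section MetricDefs.
Variables (X : Type) (d : X -> X -> R).

Definition is_metric : Prop :=
  [/\ forall x y, 0 <= d x y,
      forall x y, d x y = 0 <-> x = y,
      forall x y, d x y = d y x &
      forall x y z, d x z <= d x y + d y z].

Definition mball (x : X) (r : R) : set X := [set y | d x y < r].
Definition mclosed_ball (x : X) (r : R) : set X := [set y | d x y <= r].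

Definition mopen (U : set X) : Prop :=
  forall x, U x -> exists2 r : R, 0 < r & mball x r `<=` U.

Definition mcompact (C : set X) : Prop :=
  forall (I : Type) (U : I -> set X), (forall i, mopen (U i)) ->
    C `<=` \bigcup_(i in [set: I]) U i ->
    exists2 F : set I, finite_set F & C `<=` \bigcup_(i in F) U i.

Definition proper_metric : Prop :=
  is_metric /\ forall x r, mcompact (mclosed_ball x r).

End MetricDefs.

Definition is_action (G : groupType) (Y : Type) (act : G -> Y -> Y) : Prop :=
  (forall y, act 1%g y = y) /\ (forall g h y, act (g * h)%g y = act g (act h y)).

Definition isometric_action (G : groupType) (Y : Type) (d : Y -> Y -> R)
  (act : G -> Y -> Y) : Prop :=
  is_action act /\ forall g x y, d (act g x) (act g y) = d x y.

Definition escapes (G : groupType) (Y : Type) (d : Y -> Y -> R)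
  (act : G -> Y -> Y) (h : nat -> G) : Prop :=
  exists y : Y, forall C : set Y, mcompact d C ->
    exists N : nat, forall n : nat, (N <= n)%N -> ~ C (act (h n) y).

Notation borel K := (g_sigma_algebraType (@open K)).

Definition compact_metrizable (K : pseudoPMetricType R) : Prop :=
  hausdorff_space K /\ compact [set: K].

(* G acts on K by homeomorphisms (continuous action of the discrete group G) *)
Definition continuous_action (G : groupType) (K : topologicalType)
  (act : G -> K -> K) : Prop :=
  is_action act /\ forall g, continuous (act g).

Definition has_invariant_prob (G : groupType) (K : pseudoPMetricType R)
  (act : G -> K -> K) : Prop :=
  exists mu : probability (borel K) R,
    forall (g : G) (A : set (borel K)), measurable A ->
      mu ((act g : borel K -> borel K) @^-1` A) = mu A.

Definition diffuse (K : pseudoPMetricType R) (eta : probability (borel K) R) : Prop :=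
  forall x : borel K, eta [set x] = 0%E.

(* (h_{sigma n} g eta - h_{sigma n} eta) -> 0 weak-*, i.e. tested against every
   continuous f : K -> R (pushforward integrals written via change of variables) *)
Definition weakstar_asymp (G : groupType) (K : pseudoPMetricType R)
  (act : G -> K -> K) (eta : probability (borel K) R) (u : nat -> G) : Prop :=
  forall (g : G) (f : K -> R), continuous f ->
    (fun n => (\int[eta]_x f (act (u n * g)%g x))
              - (\int[eta]_x f (act (u n) x))) @ \oo --> (0 : R).

Definition properly_proximal (G : groupType) (Y : Type) (d : Y -> Y -> R)
  (act : G -> Y -> Y) : Prop :=
  proper_metric d /\ isometric_action d act /\
  exists (l : nat) (K : 'I_l -> pseudoPMetricType R)
         (actK : forall i, G -> K i -> K i)
         (eta : forall i, probability (borel (K i)) R),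
    (forall i, [/\ compact_metrizable (K i), continuous_action (actK i),
                   ~ has_invariant_prob (actK i) & diffuse (eta i)]) /\
    forall h : nat -> G, escapes d act h ->
      exists (i : 'I_l) (sigma : nat -> nat),
        (forall m n, (m < n)%N -> (sigma m < sigma n)%N) /\
        weakstar_asymp (actK i) (eta i) (fun n => h (sigma n)).

Definition countable_group (G : groupType) : Prop :=
  exists f : G -> nat, injective f.

Definition group_hom (G H : groupType) (p : G -> H) : Prop :=
  forall x y, p (x * y)%g = (p x * p y)%g.

Definition prod_dist (k : nat) (X : 'I_k -> Type) (d : forall i, X i -> X i -> R)
  (x y : forall i, X i) : R :=
  Num.sqrt (\sum_(i < k) (d i (x i) (y i)) ^+ 2).

Definition prod_act (k : nat) (Gs : 'I_k -> groupType) (G : groupType)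
  (p : forall i, G -> Gs i) (X : 'I_k -> Type) (act : forall i, Gs i -> X i -> X i)
  (g : G) (x : forall i, X i) : forall i, X i :=
  fun i => act i (p i g) (x i).

(* If a sequence h_n in G escapes every compact subset of the product, then
   along a subsequence some coordinate p_i(h_n) escapes every compact subset of
   X_i: otherwise every coordinate of the orbit is eventually bounded, so the
   orbit eventually stays in a closed ball of the l^2-product, and that ball is
   compact because closed balls of the factors are (compactness is handled
   through sequential compactness).  The boundaries of the factors, pulled back
   to G through the surjections p_i, therefore witness proper proximality of
   the product action: pulling back along a surjective homomorphism preserves
   continuity and the absence of an invariant probability measure, and the
   asymptotic invariance along p_i(h_n) is literally that of the pulled-back
   action along h_n. *)

From mathcomp Require Import all_boot all_order all_algebra monoid.
From mathcomp Require Import all_classical all_reals.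
From mathcomp Require Import topology normedtype sequences measure lebesgue_integral probability.
From mathcomp Require Import Rstruct Rstruct_topology.
From mathcomp Require Import ring lra.

Set Implicit Arguments.
Unset Strict Implicit.
Unset Printing Implicit Defensive.

Import Order.TTheory GRing.Theory Num.Theory.
Local Open Scope classical_set_scope.
Local Open Scope ring_scope.

Notation increasing s := {homo s : m n / (m < n)%N}.

Lemma increasing_ge_id (s : nat -> nat) : increasing s -> forall n, (n <= s n)%N.
Proof. by move=> hs; elim=> // n IH; exact: leq_ltn_trans IH (hs _ _ (ltnSn n)). Qed.

Lemma increasing_choice (P : nat -> nat -> Prop) :
  (forall m N, exists2 n, (N <= n)%N & P m n) ->
  exists2 s : nat -> nat, increasing s & forall m, P m (s m).
Proof.
move=> hP.
have /choice[c hc] : forall mN : nat * nat, exists n, (mN.2 <= n)%N /\ P mN.1 n.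
  by move=> [m N]; have [n] := hP m N; exists n.
pose fix s n := if n is n'.+1 then c (n, (s n').+1) else c (0, 0)%N.
exists s; last by case=> [|n]; exact: (hc (_, _)).2.
apply: (homo_ltn (r := fun a b => (a < b)%N)); first exact: ltn_trans.
by move=> n; exact: (hc (_, _)).1.
Qed.

Lemma choice_dep (I : Type) (T : I -> Type) (P : forall i, T i -> Prop) :
  (forall i, exists x : T i, P i x) -> exists f : forall i, T i, forall i, P i (f i).
Proof. by move=> h; exists (fun i => sval (cid (h i))) => i; exact: svalP (cid (h i)). Qed.

Lemma eventually_invSn_lt (F : archiRealFieldType) (e : F) :
  0 < e -> exists N, forall n, (N <= n)%N -> n.+1%:R^-1 < e.
Proof.
move=> e0; exists (Num.bound e^-1) => n Nn.
rewrite -[e]invrK ltf_pV2 ?posrE ?invr_gt0 //.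
apply: lt_le_trans (archi_boundP _) _; first by rewrite invr_ge0 ltW.
by rewrite ler_nat; exact: leqW.
Qed.

Lemma finite_set_bounded (T : Type) (A : set T) (f : T -> nat) :
  finite_set A -> exists N, forall x, A x -> (f x <= N)%N.
Proof.
move=> /(finite_image f) /finite_seqP[s fA]; exists (\max_(n <- s) n) => x Ax.
have : (f @` A) (f x) by exists x.
by rewrite fA /= => fxs; exact: (@leq_bigmax_seq _ _ xpredT id).
Qed.

Section MetricSpace.
Variables (X : Type) (d : X -> X -> R).
Hypothesis hd : is_metric d.

Definition mcvg_to (u : nat -> X) (z : X) : Prop :=
  forall e : R, 0 < e -> exists N, forall n, (N <= n)%N -> d z (u n) < e.

Definition seq_mcompact (C : set X) : Prop :=
  forall u : nat -> X, (forall n, C (u n)) ->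
    exists2 z, C z & exists2 s, increasing s & mcvg_to (u \o s) z.

Lemma dist_ge0 x y : 0 <= d x y. Proof. by case: hd. Qed.
Lemma dist_xx x : d x x = 0. Proof. by case: hd => _ /(_ x x) [_ ->]. Qed.
Lemma distC x y : d x y = d y x. Proof. by case: hd. Qed.
Lemma dist_triangle x y z : d x z <= d x y + d y z. Proof. by case: hd. Qed.

Lemma mopen_mball x r : mopen d (mball d x r).
Proof.
move=> y dxy; exists (r - d x y); first by rewrite subr_gt0.
by move=> z dyz; have := dist_triangle x y z; rewrite /mball /= in dxy dyz *; lra.
Qed.

Lemma mcvg_to_subseq u z s : mcvg_to u z -> increasing s -> mcvg_to (u \o s) z.
Proof.
move=> hu hs e /hu [N hN]; exists N => n Nn.
exact/hN/(leq_trans Nn (increasing_ge_id hs n)).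
Qed.

Lemma mcvg_to_mclosed_ball u z x r :
  (forall n, mclosed_ball d x r (u n)) -> mcvg_to u z -> mclosed_ball d x r z.
Proof.
rewrite /mclosed_ball /= => hu hz; rewrite leNgt; apply/negP => rz.
have [N /(_ N (leqnn N))] := hz (d x z - r) (ltac:(by rewrite subr_gt0)).
by have := hu N; have := dist_triangle x (u N) z; rewrite (distC z); lra.
Qed.

Lemma mcompact_bounded C y : mcompact d C -> exists B, forall x, C x -> d y x <= B.
Proof.
move=> hC.
have cov : C `<=` \bigcup_(n in [set: nat]) mball d y n%:R.
  by move=> x _; exists (Num.bound (d y x)) => //; exact: archi_boundP (dist_ge0 y x).
have [F fF hF] := hC nat _ (fun n => @mopen_mball y n%:R) cov.
have [N hN] := finite_set_bounded id fF.
exists N%:R => x /hF [n /hN Fn /= yx].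
by rewrite ltW // (lt_le_trans yx) // ler_nat.
Qed.

Lemma cluster_subseq u z :
  (forall e, 0 < e -> forall N, exists2 n, (N <= n)%N & d z (u n) < e) ->
  exists2 s, increasing s & mcvg_to (u \o s) z.
Proof.
move=> hz; have inv_gt0 m : 0 < m.+1%:R^-1 :> R by rewrite invr_gt0.
have [s hs hsz] := increasing_choice (P := fun m n => d z (u n) < m.+1%:R^-1)
  (fun m => hz _ (inv_gt0 m)).
exists s => // e /eventually_invSn_lt [N hN]; exists N => n /hN.
exact: lt_trans (hsz n).
Qed.

Lemma mcompact_cvg_subseq C u : mcompact d C -> (forall n, C (u n)) ->
  exists z, exists2 s, increasing s & mcvg_to (u \o s) z.
Proof.
move=> hC Cu.
have [[z hz]|nocluster] := pselect (exists z, forall e, 0 < e ->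
    forall N, exists2 n, (N <= n)%N & d z (u n) < e).
  by exists z; apply: cluster_subseq.
(* Without a cluster point, every z has a ball that u eventually avoids;
   finitely many of these balls cover C, which contains every u n. *)
have far z : exists rN : R * nat, 0 < rN.1 /\ forall n, (rN.2 <= n)%N -> rN.1 <= d z (u n).
  apply: contrapT => hz; apply: nocluster; exists z => e e0 N; apply: contrapT => hN.
  apply: hz; exists (e, N); split=> // n Nn; rewrite leNgt; apply/negP => lt.
  by apply: hN; exists n.
have [rN hrN] := choice far.
have cov : C `<=` \bigcup_(z in [set: X]) mball d z (rN z).1.
  by move=> x _; exists x => //; rewrite /mball /= dist_xx; exact: (hrN x).1.
have [F fF hF] := hC X _ (fun z => @mopen_mball z _) cov.
have [N hN] := finite_set_bounded (fun z => (rN z).2) fF.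
have [z Fz] := hF _ (Cu N); rewrite /mball /= ltNge => /negP[].
exact/(hrN z).2/hN.
Qed.

Section SequentialCompactness.
Variable C : set X.
Hypothesis hC : seq_mcompact C.

Lemma seq_mcompact_lebesgue_number (I : Type) (U : I -> set X) :
  (forall i, mopen d (U i)) -> C `<=` \bigcup_(i in [set: I]) U i ->
  exists2 r : R, 0 < r & forall x, C x -> exists i, mball d x r `<=` U i.
Proof.
move=> hU hcov; apply: contrapT => hno.
have bad m : exists x, C x /\ forall i, ~ mball d x m.+1%:R^-1 `<=` U i.
  apply: contrapT => hm; apply: hno; exists m.+1%:R^-1; first by rewrite invr_gt0.
  move=> x Cx; apply: contrapT => hx; apply: hm; exists x; split=> // i hi.
  by apply: hx; exists i.
have [u hu] := choice bad.
have [z Cz [s hs hsz]] := hC (fun n => (hu n).1).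
have [i _ Uiz] := hcov z Cz.
have [r r0 hr] := hU i z Uiz.
have r20 : 0 < r / 2 by rewrite divr_gt0.
have [N1 hN1] := hsz _ r20.
have [N2 hN2] := eventually_invSn_lt r20.
pose n := maxn N1 N2.
case: ((hu (s n)).2 i) => y hy; apply: hr.
have := hN1 n (leq_maxl _ _).
have := hN2 (s n) (leq_trans (leq_maxr _ _) (increasing_ge_id hs n)).
have := dist_triangle z (u (s n)) y.
rewrite /mball /= in hy *; move: (s n).+1%:R^-1 hy => t; lra.
Qed.

Lemma seq_mcompact_totally_bounded r : 0 < r ->
  exists2 F : set X, finite_set F & F `<=` C /\ C `<=` \bigcup_(x in F) mball d x r.
Proof.
move=> r0; apply: contrapT => hno.
have [c0 Cc0] : exists c0, C c0.
  apply: contrapT => C0; apply: hno; exists set0 => //; split=> // x Cx.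
  by case: C0; exists x.
have far (F : set X) : exists y, finite_set F -> F `<=` C ->
    C y /\ forall x, F x -> r <= d x y.
  have [[fF FC]|nF] := pselect (finite_set F /\ F `<=` C); last first.
    by exists c0 => fF FC; case: nF.
  have [y Cy yF] : exists2 y, C y & ~ (\bigcup_(x in F) mball d x r) y.
    apply: contrapT => hy; apply: hno; exists F => //; split=> // y Cy.
    by apply: contrapT => ny; apply: hy; exists y.
  exists y => _ _; split=> // x Fx; rewrite leNgt; apply/negP => dxy.
  by apply: yF; exists x.
have [g hg] := choice far.
(* S n = {v j | j < n}, so the v n are pairwise r-apart. *)
pose fix S n := if n is n'.+1 then S n' `|` [set g (S n')] else set0.
have S_ok n : finite_set (S n) /\ S n `<=` C.
  elim: n => [|n [fS SC]] /=; first by split=> //; exact: finite_set0.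
  split; first by rewrite finite_setU; split=> //; exact: finite_set1.
  by move=> x [/SC //| ->]; exact: (hg _ fS SC).1.
pose v n := g (S n).
have Cv n : C (v n) by exact: (hg _ (S_ok n).1 (S_ok n).2).1.
have sep m n : (m < n)%N -> r <= d (v m) (v n).
  move=> mn; apply: (hg _ (S_ok n).1 (S_ok n).2).2.
  elim: n mn => // n IH; rewrite ltnS leq_eqVlt => /predU1P[->|/IH Sm]; [right | left] => //.
have [z _ [s hs hsz]] := hC Cv.
have [N hN] := hsz (r / 2) (ltac:(by rewrite divr_gt0)).
have := sep _ _ (hs N N.+1 (ltnSn N)).
have := hN N (leqnn N); have := hN N.+1 (leqnSn N).
have := dist_triangle (v (s N)) z (v (s N.+1)); rewrite [d (v (s N)) z]distC /=.
lra.
Qed.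

Lemma seq_mcompact_mcompact : mcompact d C.
Proof.
move=> I U hU hcov.
have [[c0 Cc0]|C0] := pselect (exists c, C c); last first.
  by exists set0 => // x Cx; case: C0; exists x.
have [i0 _ _] := hcov c0 Cc0.
have [r r0 leb] := seq_mcompact_lebesgue_number hU hcov.
have [F fF [FC hF]] := seq_mcompact_totally_bounded r0.
have idx x : exists i, C x -> mball d x r `<=` U i.
  have [/leb[i hi]|nCx] := pselect (C x); first by exists i.
  by exists i0 => /nCx.
have [j hj] := choice idx.
exists (j @` F); first exact: finite_image.
move=> y /hF [x Fx xy]; exists (j x); first by exists x.
exact: hj (FC _ Fx) _ xy.
Qed.

End SequentialCompactness.

Lemma escapes_of_dist_gt (H : groupType) (act : H -> X -> X) (h : nat -> H) y :
  (forall n, n%:R < d y (act (h n) y)) -> escapes d act h.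
Proof.
move=> hfar; exists y => C /(mcompact_bounded y) [B hB].
exists (Num.bound `|B|) => n Nn /hB yB.
have := archi_boundP (normr_ge0 B); have := ler_norm B; have := hfar n.
have : (Num.bound `|B|)%:R <= n%:R :> R by rewrite ler_nat.
lra.
Qed.

End MetricSpace.

Lemma escapes_dist_unbounded (X : Type) (d : X -> X -> R) (H : groupType)
    (act : H -> X -> X) (h : nat -> H) y :
  proper_metric d ->
  (forall C, mcompact d C -> exists N, forall n, (N <= n)%N -> ~ C (act (h n) y)) ->
  forall M N, exists2 n, (N <= n)%N & M < d y (act (h n) y).
Proof.
move=> [_ hball] hesc M N; have [N0 hN0] := hesc _ (hball y M).
exists (maxn N N0); first exact: leq_maxl.
by rewrite ltNge; apply/negP; exact: hN0 _ (leq_maxr _ _).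
Qed.

Section SumOfSquares.
Variables (F : rcfType) (I : finType).
Implicit Types (a b : I -> F).

Lemma sumr_sqr_ge0 a : 0 <= \sum_i a i ^+ 2.
Proof. by apply: sumr_ge0 => i _; exact: sqr_ge0. Qed.

Lemma sqrt_sumr_sqr_eq0 a : Num.sqrt (\sum_i a i ^+ 2) = 0 -> forall i, a i = 0.
Proof.
move/eqP; rewrite sqrtr_eq0 => le0 i; apply/eqP; rewrite -sqrf_eq0; apply/eqP.
have /psumr_eq0P -> // : \sum_i a i ^+ 2 = 0 by apply/le_anti; rewrite le0 sumr_sqr_ge0.
by move=> j _; exact: sqr_ge0.
Qed.

Lemma cauchy_schwarz a b :
  \sum_i a i * b i <= Num.sqrt (\sum_i a i ^+ 2) * Num.sqrt (\sum_i b i ^+ 2).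
Proof.
set A := Num.sqrt (\sum_i a i ^+ 2); set B := Num.sqrt (\sum_i b i ^+ 2).
have [A0|A_neq0] := eqVneq A 0.
  by rewrite big1 ?mulr_ge0 ?sqrtr_ge0 // => i _; rewrite (sqrt_sumr_sqr_eq0 A0) mul0r.
have [B0|B_neq0] := eqVneq B 0.
  by rewrite big1 ?mulr_ge0 ?sqrtr_ge0 // => i _; rewrite (sqrt_sumr_sqr_eq0 B0) mulr0.
have AB_gt0 : 0 < 2 * A * B by rewrite !mulr_gt0 // lt0r ?A_neq0 ?B_neq0 sqrtr_ge0.
have A2 : A ^+ 2 = \sum_i a i ^+ 2 by rewrite sqr_sqrtr ?sumr_sqr_ge0.
have B2 : B ^+ 2 = \sum_i b i ^+ 2 by rewrite sqr_sqrtr ?sumr_sqr_ge0.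
rewrite -(ler_pM2l AB_gt0) mulr_sumr.
have -> : 2 * A * B * (A * B) = \sum_i (B ^+ 2 * a i ^+ 2 + A ^+ 2 * b i ^+ 2).
  by rewrite big_split /= -!mulr_sumr -A2 -B2; ring.
apply: ler_sum => i _; rewrite -subr_ge0.
by rewrite (_ : _ - _ = (B * a i - A * b i) ^+ 2) ?sqr_ge0 //; ring.
Qed.

Lemma minkowski a b :
  Num.sqrt (\sum_i (a i + b i) ^+ 2) <=
  Num.sqrt (\sum_i a i ^+ 2) + Num.sqrt (\sum_i b i ^+ 2).
Proof.
set A := Num.sqrt (\sum_i a i ^+ 2); set B := Num.sqrt (\sum_i b i ^+ 2).
have A2 : A ^+ 2 = \sum_i a i ^+ 2 by rewrite sqr_sqrtr ?sumr_sqr_ge0.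
have B2 : B ^+ 2 = \sum_i b i ^+ 2 by rewrite sqr_sqrtr ?sumr_sqr_ge0.
rewrite -[A + B]ger0_norm ?addr_ge0 ?sqrtr_ge0 // -sqrtr_sqr ler_wsqrtr //.
rewrite (_ : \sum_i _ = A ^+ 2 + (\sum_i a i * b i) *+ 2 + B ^+ 2); last first.
  by rewrite A2 B2 -sumrMnl -!big_split /=; apply: eq_bigr => i _; ring.
by rewrite sqrrD lerD2r lerD2l lerMn2r /= cauchy_schwarz.
Qed.

Lemma ler_sqrt_sumr_sqr a b : (forall i, 0 <= a i <= b i) ->
  Num.sqrt (\sum_i a i ^+ 2) <= Num.sqrt (\sum_i b i ^+ 2).
Proof.
move=> hab; apply/ler_wsqrtr/ler_sum => i _; have /andP[a0 ab] := hab i.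
by rewrite ler_pXn2r ?nnegrE // (le_trans a0 ab).
Qed.

Lemma normr_le_sqrt_sumr_sqr a i : `|a i| <= Num.sqrt (\sum_j a j ^+ 2).
Proof.
rewrite -sqrtr_sqr ler_wsqrtr // (bigD1 i) //= lerDl.
by apply: sumr_ge0 => j _; exact: sqr_ge0.
Qed.

Lemma sqrt_sumr_sqr_le_card a c : 0 <= c -> (forall i, `|a i| <= c) ->
  Num.sqrt (\sum_i a i ^+ 2) <= #|I|%:R * c.
Proof.
move=> c0 hc; rewrite -[_ * c]ger0_norm ?mulr_ge0 // -sqrtr_sqr ler_wsqrtr //.
apply: (@le_trans _ _ (\sum_(i : I) c ^+ 2)).
  by apply: ler_sum => i _; rewrite -real_normK ?num_real // ler_pXn2r ?nnegrE.
rewrite sumr_const -[c ^+ 2 *+ _]mulr_natl exprMn.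
apply: ler_wpM2r; first exact: sqr_ge0.
rewrite -natrX ler_nat (_ : #|xpredT| = #|I|) //.
by case: #|I| => // n; rewrite leq_pmulr.
Qed.

End SumOfSquares.

Section ProductMetric.
Variables (k : nat) (X : 'I_k -> Type) (d : forall i, X i -> X i -> R).
Arguments d : clear implicits.
Hypothesis hd : forall i, is_metric (d i).

Lemma prod_dist_metric : is_metric (prod_dist d).
Proof.
split.
- by move=> x y; exact: sqrtr_ge0.
- move=> x y; split=> [/sqrt_sumr_sqr_eq0 xy|->].
    apply: functional_extensionality_dep => i.
    by case: (hd i) => _ /(_ (x i) (y i)) [/(_ (xy i))].
  by rewrite /prod_dist big1 ?sqrtr0 // => i _; rewrite dist_xx // expr0n.
- by move=> x y; rewrite /prod_dist; under eq_bigr do rewrite distC //.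
- move=> x y z; apply: le_trans (minkowski _ _); apply: ler_sqrt_sumr_sqr => i.
  by rewrite dist_ge0 // dist_triangle.
Qed.

Lemma dist_le_prod_dist x y i : d i (x i) (y i) <= prod_dist d x y.
Proof.
apply: le_trans (normr_le_sqrt_sumr_sqr (fun j => d j (x j) (y j)) i).
exact: ler_norm.
Qed.

Lemma prod_mcvg_to u z : (forall i, mcvg_to (d i) (fun n => u n i) (z i)) ->
  mcvg_to (prod_dist d) u z.
Proof.
move=> hcvg e e0; pose δ := e / k.+1%:R.
have δ0 : 0 < δ by rewrite divr_gt0.
have [N hN] := choice (fun i => hcvg i δ δ0).
exists (\max_i N i)%N => n Nn.
apply: le_lt_trans (sqrt_sumr_sqr_le_card (ltW δ0) _) _ => [i|].
  by rewrite ger0_norm ?dist_ge0 //; apply/ltW/hN; exact: leq_trans (leq_bigmax i) Nn.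
by rewrite card_ord /δ mulrA ltr_pdivrMr // mulrC ltr_pM2l // ltr_nat.
Qed.

Lemma prod_cvg_subseq (C : forall i, set (X i)) (u : nat -> forall i, X i) :
  (forall i, mcompact (d i) (C i)) -> (forall n i, C i (u n i)) ->
  exists z, exists2 s, increasing s & mcvg_to (prod_dist d) (u \o s) z.
Proof.
move=> hC Cu.
have partial j : exists2 s, increasing s & forall i : 'I_k, (i < j)%N ->
    exists zi, mcvg_to (d i) (fun n => u (s n) i) zi.
  elim: j => [|j [s hs hsj]]; first by exists id.
  have [jk|kj] := ltnP j k; last first.
    by exists s => // i ij; apply: hsj; exact: leq_trans (ltn_ord i) kj.
  pose i0 := Ordinal jk.
  have [z [t ht hzt]] := mcompact_cvg_subseq (hd i0) (hC i0) (fun n => Cu (s n) i0).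
  exists (s \o t); first by move=> m n /ht /hs.
  move=> i; rewrite ltnS leq_eqVlt => /predU1P[ij|/hsj [zi hzi]].
    have -> : i = i0 by exact: val_inj.
    by exists z.
  by exists zi; exact: (mcvg_to_subseq hzi ht).
have [s hs hsk] := partial k.
have [z hz] := choice_dep (fun i => hsk i (ltn_ord i)).
by exists z, s => //; exact: prod_mcvg_to.
Qed.

End ProductMetric.

Lemma prod_dist_proper (k : nat) (X : 'I_k -> Type) (d : forall i, X i -> X i -> R) :
  (forall i, proper_metric (d i)) -> proper_metric (prod_dist d).
Proof.
move=> hX; have hd i := (hX i).1.
split; first exact: prod_dist_metric.
move=> y r; apply: (seq_mcompact_mcompact (prod_dist_metric hd)) => u hu.
have [z [s hs hsz]] := prod_cvg_subseq hd (C := fun i => mclosed_ball (d i) (y i) r)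
  (fun i => (hX i).2 _ _) (fun n i => le_trans (dist_le_prod_dist d y (u n) i) (hu n)).
exists z; last by exists s.
exact: (mcvg_to_mclosed_ball (prod_dist_metric hd) (fun n => hu (s n)) hsz).
Qed.

Lemma group_hom1 (G H : groupType) (q : G -> H) : group_hom q -> q 1%g = 1%g.
Proof. by move=> hq; apply: (@mulgI _ (q 1%g)); rewrite -hq !mulg1. Qed.

Section ProductAction.
Variables (k : nat) (Gs : 'I_k -> groupType) (X : 'I_k -> Type).
Variables (d : forall i, X i -> X i -> R) (act : forall i, Gs i -> X i -> X i).
Variables (G : groupType) (p : forall i, G -> Gs i).
Arguments d : clear implicits.
Arguments act : clear implicits.
Arguments p : clear implicits.
Hypothesis hp : forall i, group_hom (p i).

Lemma prod_act_isometric : (forall i, isometric_action (d i) (act i)) ->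
  isometric_action (prod_dist d) (prod_act p act).
Proof.
move=> hact; split; first split.
- move=> y; apply: functional_extensionality_dep => i.
  by rewrite /prod_act group_hom1 // (hact i).1.1.
- move=> g h y; apply: functional_extensionality_dep => i.
  by rewrite /prod_act hp (hact i).1.2.
- by move=> g x y; rewrite /prod_dist /prod_act; under eq_bigr do rewrite (hact _).2.
Qed.

Lemma prod_escapes_coord h : (forall i, proper_metric (d i)) ->
  escapes (prod_dist d) (prod_act p act) h ->
  exists i, exists2 s, increasing s & escapes (d i) (act i) (fun n => p i (h (s n))).
Proof.
move=> hX [y hy].
pose disp i n := d i (y i) (act i (p i (h n)) (y i)).
have [[i hi]|bounded] := pselect (exists i, forall M N, exists2 n, (N <= n)%N & M < disp i n).
  have [s hs hsm] := increasing_choice (P := fun m n => m%:R < disp i n) (fun m => hi m%:R).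
  by exists i, s => //; exact: (escapes_of_dist_gt (hX i).1 hsm).
have /choice[MN hMN] : forall i, exists MN : R * nat,
    forall n, (MN.2 <= n)%N -> disp i n <= MN.1.
  move=> i; apply: contrapT => hni; apply: bounded; exists i => M N.
  apply: contrapT => hMN; apply: hni; exists (M, N) => n /= Nn.
  by rewrite leNgt; apply/negP => Mlt; apply: hMN; exists n.
have [n Nn] := escapes_dist_unbounded (prod_dist_proper hX) hy
  (Num.sqrt (\sum_i (MN i).1 ^+ 2)) (\max_i (MN i).2).
rewrite ltNge => /negP[]; rewrite /prod_dist /prod_act.
apply: ler_sqrt_sumr_sqr => i; rewrite (dist_ge0 (hX i).1) /=.
exact: hMN (leq_trans (leq_bigmax i) Nn).
Qed.

End ProductAction.

(* The finite family of compact H-spaces K_j with measures eta_j from the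
   definition of proper proximality, indexed by an arbitrary finite type. *)
Record boundary (H : groupType) := Boundary {
  bindex : finType;
  bspace : bindex -> pseudoPMetricType R;
  bact : forall t, H -> bspace t -> bspace t;
  bmeasure : forall t, probability (borel (bspace t)) R }.
Arguments bspace {H} b t.
Arguments bact {H} b t.
Arguments bmeasure {H} b t.

Section Boundaries.
Variable H : groupType.
Implicit Type B : boundary H.

Definition admissible_boundary B : Prop :=
  forall t, [/\ compact_metrizable (bspace B t), continuous_action (bact B t),
    ~ has_invariant_prob (bact B t) & diffuse (bmeasure B t)].

Definition boundary_detects (Y : Type) (dY : Y -> Y -> R) (actY : H -> Y -> Y) B :=
  forall h : nat -> H, escapes dY actY h ->
    exists t s, increasing s /\ weakstar_asymp (bact B t) (bmeasure B t) (fun n => h (s n)).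

Lemma properly_proximalP (Y : Type) (dY : Y -> Y -> R) (actY : H -> Y -> Y) :
  properly_proximal dY actY <->
  [/\ proper_metric dY, isometric_action dY actY &
      exists B, admissible_boundary B /\ boundary_detects dY actY B].
Proof.
split=> [[hY [hact [l [K [a [eta [adm det]]]]]]]|[hY hact [B [adm det]]]].
  by split=> //; exists (@Boundary H 'I_l K a eta).
split=> //; split=> //.
exists #|bindex B|, (fun j => bspace B (enum_val j)), (fun j => bact B (enum_val j)),
  (fun j => bmeasure B (enum_val j)); split=> [j|h /det [t [s [hs hw]]]].
  exact: adm.
by exists (enum_rank t), s; rewrite enum_rankK.
Qed.

End Boundaries.

Definition pullback_boundary (G H : groupType) (q : G -> H) (B : boundary H) : boundary G :=
  @Boundary G (bindex B) (bspace B) (fun t g => bact B t (q g)) (bmeasure B).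

Definition sum_boundary (G : groupType) (I : finType) (B : I -> boundary G) : boundary G :=
  @Boundary G {i : I & bindex (B i)}
    (fun t => bspace (B (tag t)) (tagged t)) (fun t => bact (B (tag t)) (tagged t))
    (fun t => bmeasure (B (tag t)) (tagged t)).

Lemma admissible_sum_boundary (G : groupType) (I : finType) (B : I -> boundary G) :
  (forall i, admissible_boundary (B i)) -> admissible_boundary (sum_boundary B).
Proof. by move=> adm [i t]; exact: adm. Qed.

Section Pullback.
Variables (G H : groupType) (q : G -> H).
Hypothesis hq : group_hom q.

Lemma continuous_action_pullback (K : topologicalType) (a : H -> K -> K) :
  continuous_action a -> continuous_action (fun g => a (q g)).
Proof.
move=> [[a1 aM] ac]; split=> [|g]; last exact: ac.
by split=> [x|g g' x]; rewrite ?group_hom1 ?hq.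
Qed.

Lemma has_invariant_prob_pullback (K : pseudoPMetricType R) (a : H -> K -> K) :
  (forall h, exists g, q g = h) -> has_invariant_prob (fun g => a (q g)) ->
  has_invariant_prob a.
Proof. by move=> qsurj [mu hmu]; exists mu => h A mA; have [g <-] := qsurj h; exact: hmu. Qed.

Lemma admissible_pullback_boundary (B : boundary H) :
  (forall h, exists g, q g = h) -> admissible_boundary B ->
  admissible_boundary (pullback_boundary q B).
Proof.
move=> qsurj adm t; have [hK hc hni hdiff] := adm t; split=> //.
- exact: continuous_action_pullback.
- by move/(has_invariant_prob_pullback qsurj).
Qed.

Lemma weakstar_asymp_pullback (K : pseudoPMetricType R) (a : H -> K -> K)
    (eta : probability (borel K) R) (u : nat -> G) :
  weakstar_asymp a eta (fun n => q (u n)) -> weakstar_asymp (fun g => a (q g)) eta u.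
Proof. by move=> hw g f cf; under eq_fun do rewrite hq; exact: hw. Qed.

End Pullback.

Lemma sum_pullback_boundary_detects (k : nat) (Gs : 'I_k -> groupType) (X : 'I_k -> Type)
    (d : forall i, X i -> X i -> R) (act : forall i, Gs i -> X i -> X i)
    (G : groupType) (p : forall i, G -> Gs i) (B : forall i, boundary (Gs i)) :
  (forall i, group_hom (p i)) -> (forall i, proper_metric (d i)) ->
  (forall i, boundary_detects (d i) (act i) (B i)) ->
  boundary_detects (prod_dist d) (prod_act p act)
    (sum_boundary (fun i => pullback_boundary (p i) (B i))).
Proof.
move=> hp hX det h /(prod_escapes_coord hX) [i [s hs /det [t [s' [hs' hw]]]]].
exists (Tagged (fun i => bindex (B i)) t), (s \o s'); split; first by move=> m n /hs' /hs.
exact: (weakstar_asymp_pullback (hp i) hw).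
Qed.

Theorem lemma1p4
  (k : nat)
  (Gs : 'I_k -> groupType)
  (X : 'I_k -> Type)
  (d : forall i, X i -> X i -> R)
  (act : forall i, Gs i -> X i -> X i)
  (hGs_countable : forall i, countable_group (Gs i))
  (hX : forall i, proper_metric (d i))
  (hact : forall i, isometric_action (d i) (act i))
  (hpp : forall i, properly_proximal (d i) (act i))
  (G : groupType)
  (p : forall i, G -> Gs i)
  (hp_hom : forall i, group_hom (p i))
  (hp_inj : forall x y : G, (forall i, p i x = p i y) -> x = y)
  (hp_surj : forall i (g : Gs i), exists x : G, p i x = g) :
  properly_proximal (prod_dist d) (prod_act p act).
Proof.
have [B hB] : exists B : forall i, boundary (Gs i),
    forall i, admissible_boundary (B i) /\ boundary_detects (d i) (act i) (B i).
  apply: (choice_dep (P := fun i B =>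
    admissible_boundary B /\ boundary_detects (d i) (act i) B)).
  by move=> i; have [_ _] := (properly_proximalP _ _).1 (hpp i).
apply/properly_proximalP; split.
- exact: prod_dist_proper.
- exact: prod_act_isometric.
exists (sum_boundary (fun i => pullback_boundary (p i) (B i))); split.
- by apply: admissible_sum_boundary => i; exact: admissible_pullback_boundary (hB i).1.
- by apply: sum_pullback_boundary_detects => // i; exact: (hB i).2.
Qed.
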